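(* Let $X$ be an almost zero-dimensional space and $A\subset X$. If there is a $\sigma$C-set $B$ in $X$ with $\partial A\subset B\subset\overline A$, then $\overline A$ is a C-set in $X$.
   Context: All spaces are separable and metrizable. A subset $A$ of a space $X$ is a C-set in $X$ if $A$ is an intersection of clopen subsets of $X$; a $\sigma$C-set is a countable union of C-sets. $X$ is almost zero-dimensional if every point of $X$ has a neighborhood basis consisting of C-sets in $X$. $\partial A$ denotes the boundary of $A$ in $X$. *)

(* separable metrizable spaces, modelled as metric spaces
   (every notion below is topological, i.e. depends only on the induced topology). *)
From Stdlib Require Import Reals.
Open Scope R_scope.

Record MetricSpace := {
  carrier :> Type;
  dist : carrier -> carrier -> R;
  dist_nonneg : forall x y, 0 <= dist x y;
  dist_eq0 : forall x y, dist x y = 0 <-> x = y;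
  dist_sym : forall x y, dist x y = dist y x;
  dist_tri : forall x y z, dist x z <= dist x y + dist y z
}.

Section Topo.
Variable X : MetricSpace.

Definition subset (A B : X -> Prop) : Prop := forall x, A x -> B x.

Definition is_open (U : X -> Prop) : Prop :=
  forall x, U x -> exists eps, 0 < eps /\ forall y, dist X x y < eps -> U y.

Definition is_closed (F : X -> Prop) : Prop := is_open (fun x => ~ F x).

Definition clopen (U : X -> Prop) : Prop := is_open U /\ is_closed U.

Definition closure (A : X -> Prop) : X -> Prop :=
  fun x => forall eps, 0 < eps -> exists y, A y /\ dist X x y < eps.

Definition interior (A : X -> Prop) : X -> Prop :=
  fun x => exists eps, 0 < eps /\ forall y, dist X x y < eps -> A y.

Definition boundary (A : X -> Prop) : X -> Prop :=
  fun x => closure A x /\ closure (fun y => ~ A y) x.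

Definition C_set (A : X -> Prop) : Prop :=
  exists Fam : (X -> Prop) -> Prop,
    (forall U, Fam U -> clopen U) /\
    (forall x, A x <-> (forall U, Fam U -> U x)).

Definition sigmaC_set (B : X -> Prop) : Prop :=
  exists C : nat -> (X -> Prop),
    (forall n, C_set (C n)) /\ (forall x, B x <-> exists n, C n x).

Definition almost_zero_dimensional : Prop :=
  forall x (U : X -> Prop), is_open U -> U x ->
    exists V, C_set V /\ interior V x /\ subset V U.

Definition separable : Prop :=
  exists D : X -> Prop,
    (exists f : nat -> X, forall x, D x -> exists n, f n = x) /\
    (forall x, closure D x).

End Topo.

From Stdlib Require Import Reals Lra Lia Classical ClassicalEpsilon Cantor.
Open Scope R_scope.

(* The set F := cl A is the union of B and int A, and int A, being open in an
   almost zero-dimensional separable space, is a countable union of C-sets; so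
   F is a closed σC-set.  To cut off a point z outside F, cover X \ F by
   countably many C-sets V_i (with interiors covering) and write F as the union
   of C-sets D_k.  Disjoint C-sets in a Lindelöf space are separated by a clopen
   set, which gives clopen G_k containing V_0 ∪ … ∪ V_k ∪ (a C-neighbourhood of
   z) and missing D_k.  Then P = ⋂ G_k contains z, misses F, is closed, and is
   open because near a point of int V_j all G_k with k ≥ j hold automatically
   while the finitely many others are open. *)

Section MetricFacts.
Variable X : MetricSpace.

Lemma dist_self (x : X) : dist X x x = 0.
Proof. exact (proj2 (dist_eq0 X x x) eq_refl). Qed.

Lemma interior_open (G : X -> Prop) : is_open X (interior X G).
Proof.
  intros z [e [He Hz]]. exists e. split; auto.
  intros w Hw. exists (e - dist X z w). split; [lra|].
  intros v Hv. apply Hz. pose proof (dist_tri X z w v). lra.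
Qed.

Lemma interior_sub (G : X -> Prop) : subset X (interior X G) G.
Proof. intros x [e [He H]]. apply H. rewrite dist_self. lra. Qed.

Lemma closure_sup (A : X -> Prop) : subset X A (closure X A).
Proof. intros y Ay e He. exists y. split; auto. rewrite dist_self. lra. Qed.

Lemma closure_closed (A : X -> Prop) : is_closed X (closure X A).
Proof.
  intros z Hz. apply not_all_ex_not in Hz as [e He].
  apply imply_to_and in He as [He He'].
  exists (e / 2). split; [lra|]. intros w Hw Hcw.
  destruct (Hcw (e / 2)) as [v [Av Dv]]; [lra|].
  apply He'. exists v. split; auto. pose proof (dist_tri X z w v). lra.
Qed.

Lemma ball_inter_finite (O : nat -> X -> Prop) (z : X) (n : nat) :
  (forall j, (j < n)%nat -> exists e, 0 < e /\ forall w, dist X z w < e -> O j w) ->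
  exists e, 0 < e /\ forall j w, (j < n)%nat -> dist X z w < e -> O j w.
Proof.
  induction n as [|n IH]; intros H.
  - exists 1. split; [lra|]. intros j w Hj. lia.
  - destruct IH as [e1 [He1 H1]]; [intros j Hj; apply H; lia|].
    destruct (H n) as [e2 [He2 H2]]; [lia|].
    exists (Rmin e1 e2). split; [apply Rmin_pos; auto|].
    intros j w Hj Hw. pose proof (Rmin_l e1 e2). pose proof (Rmin_r e1 e2).
    destruct (Nat.lt_ge_cases j n).
    + apply H1; auto. lra.
    + replace j with n by lia. apply H2. lra.
Qed.

Lemma open_inter_eventually (G : nat -> X -> Prop) :
  (forall k, is_open X (G k)) ->
  (forall w, (forall k, G k w) -> exists j e, 0 < e /\
     forall w', dist X w w' < e -> forall k, (j <= k)%nat -> G k w') ->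
  is_open X (fun w => forall k, G k w).
Proof.
  intros HG Hev w Pw. destruct (Hev w Pw) as [j [e1 [He1 H1]]].
  destruct (ball_inter_finite G w j) as [e2 [He2 H2]]; [intros k _; apply HG, Pw|].
  exists (Rmin e1 e2). split; [apply Rmin_pos; auto|].
  intros w' Hw' k. pose proof (Rmin_l e1 e2). pose proof (Rmin_r e1 e2).
  destruct (Nat.lt_ge_cases k j).
  - apply H2; auto. lra.
  - apply H1; auto. lra.
Qed.

Lemma closed_inter (G : nat -> X -> Prop) :
  (forall k, is_closed X (G k)) -> is_closed X (fun w => forall k, G k w).
Proof.
  intros HG w nPw. apply not_all_ex_not in nPw as [k nG].
  destruct (HG k w nG) as [e [He H]].
  exists e. split; auto. intros w' Hw' Pw'. exact (H w' Hw' (Pw' k)).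
Qed.

Lemma closure_not_boundary_interior (A : X -> Prop) (y : X) :
  closure X A y -> ~ boundary X A y -> interior X A y.
Proof.
  intros Hy Hb.
  assert (Hc : ~ closure X (fun w => ~ A w) y) by (intros Hc; apply Hb; split; auto).
  apply not_all_ex_not in Hc as [e He]. apply imply_to_and in He as [He He'].
  exists e. split; auto. intros w Hw. apply NNPP. intros nA. apply He'. eauto.
Qed.

End MetricFacts.

Section ClopenAndCSets.
Variable X : MetricSpace.

Lemma clopen_empty : clopen X (fun _ => False).
Proof. split; [intros z []|]. intros z _. exists 1. split; [lra|auto]. Qed.

Lemma clopen_compl (U : X -> Prop) : clopen X U -> clopen X (fun z => ~ U z).
Proof.
  intros [Ho Hc]. split; [exact Hc|].
  intros z Hz. apply NNPP in Hz. destruct (Ho z Hz) as [e [He H]].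
  exists e. split; auto.
Qed.

Lemma clopen_union (U V : X -> Prop) :
  clopen X U -> clopen X V -> clopen X (fun z => U z \/ V z).
Proof.
  intros [Uo Uc] [Vo Vc]. split.
  - intros z [Hz|Hz].
    + destruct (Uo z Hz) as [e [He H]]. exists e. split; auto.
    + destruct (Vo z Hz) as [e [He H]]. exists e. split; auto.
  - intros z Hz. destruct (Uc z) as [e1 [He1 H1]]; [tauto|].
    destruct (Vc z) as [e2 [He2 H2]]; [tauto|].
    exists (Rmin e1 e2). split; [apply Rmin_pos; auto|].
    pose proof (Rmin_l e1 e2). pose proof (Rmin_r e1 e2).
    intros w Hw [Hw'|Hw']; [apply (H1 w)|apply (H2 w)]; auto; lra.
Qed.

Lemma Cset_empty : C_set X (fun _ => False).
Proof.
  exists (fun U => U = (fun _ : X => False)). split.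
  - intros U ->. apply clopen_empty.
  - intros x. split; [tauto|]. intros H. exact (H _ eq_refl).
Qed.

Lemma Cset_union (A1 A2 : X -> Prop) :
  C_set X A1 -> C_set X A2 -> C_set X (fun z => A1 z \/ A2 z).
Proof.
  intros [F1 [HF1 E1]] [F2 [HF2 E2]].
  exists (fun W => exists U V, F1 U /\ F2 V /\ W = (fun z => U z \/ V z)). split.
  - intros W [U [V [FU [FV ->]]]]. apply clopen_union; auto.
  - intros x. split.
    + intros [H|H] W [U [V [FU [FV ->]]]]; [left; apply E1|right; apply E2]; auto.
    + intros H. apply NNPP. intros Hn.
      assert (N1 : ~ A1 x) by tauto. assert (N2 : ~ A2 x) by tauto.
      rewrite E1 in N1. rewrite E2 in N2.
      apply not_all_ex_not in N1 as [U HU]. apply imply_to_and in HU.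
      apply not_all_ex_not in N2 as [V HV]. apply imply_to_and in HV.
      destruct (H (fun z => U z \/ V z)); [exists U, V|..]; tauto.
Qed.

Lemma Cset_finite_union (V : nat -> X -> Prop) (k : nat) :
  (forall i, C_set X (V i)) -> C_set X (fun z => exists i, (i <= k)%nat /\ V i z).
Proof.
  intros HV. induction k as [|k IH].
  - destruct (HV 0%nat) as [F [HF E]]. exists F. split; auto.
    intros x. rewrite <- E. split.
    + intros [i [Hi Vi]]. replace i with 0%nat in Vi by lia. exact Vi.
    + intros h. exists 0%nat. auto.
  - destruct (Cset_union _ _ IH (HV (S k))) as [F [HF E]]. exists F. split; auto.
    intros x. rewrite <- E. split.
    + intros [i [Hi Vi]]. destruct (Nat.le_gt_cases i k).
      * left. eauto.
      * right. replace (S k) with i by lia. exact Vi.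
    + intros [[i [Hi Vi]]|h]; [exists i|exists (S k)]; auto.
Qed.

Lemma clopen_nbhd_off_Cset (C : X -> Prop) (y : X) :
  C_set X C -> ~ C y -> exists Z, clopen X Z /\ Z y /\ (forall w, C w -> ~ Z w).
Proof.
  intros [F [HF E]] Hy. rewrite E in Hy.
  apply not_all_ex_not in Hy as [U HU]. apply imply_to_and in HU as [FU NU].
  exists (fun z => ~ U z). split; [apply clopen_compl; auto|].
  split; auto. intros w Cw h. apply h, E; auto.
Qed.

Lemma exists_first_index (Z : nat -> X -> Prop) (z : X) :
  (exists n, Z n z) -> exists n, Z n z /\ forall j, (j < n)%nat -> ~ Z j z.
Proof.
  intros Hex.
  destruct (Wf_nat.dec_inh_nat_subset_has_unique_least_element (fun n => Z n z)
             (fun n => classic _) Hex) as [n [[Zn Hmin] _]].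
  exists n. split; [exact Zn|]. intros j Hj Zj. specialize (Hmin j Zj). lia.
Qed.

(* Disjointifying a countable clopen cover: each point is assigned the first
   member of the cover containing it, and the assignment is locally constant. *)
Lemma clopen_first_index (Z : nat -> X -> Prop) (S : nat -> Prop) :
  (forall n, clopen X (Z n)) -> (forall z, exists n, Z n z) ->
  clopen X (fun z => exists n, Z n z /\ (forall j, (j < n)%nat -> ~ Z j z) /\ S n).
Proof.
  intros HZ Hcov.
  assert (Hlocal : forall z n, Z n z -> (forall j, (j < n)%nat -> ~ Z j z) ->
     exists e, 0 < e /\ forall w, dist X z w < e ->
       Z n w /\ forall j, (j < n)%nat -> ~ Z j w).
  { intros z n Zn Zj.
    destruct (ball_inter_finite X (fun j w => ~ Z j w) z n) as [e1 [He1 H1]].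
    { intros j Hj. apply (proj2 (HZ j)), Zj, Hj. }
    destruct (proj1 (HZ n) z Zn) as [e2 [He2 H2]].
    exists (Rmin e1 e2). split; [apply Rmin_pos; auto|].
    pose proof (Rmin_l e1 e2). pose proof (Rmin_r e1 e2).
    intros w Hw. split; [apply H2; lra|]. intros j Hj. apply H1; auto. lra. }
  split.
  - intros z [n [Zn [Zj Sn]]]. destruct (Hlocal z n Zn Zj) as [e [He Hw]].
    exists e. split; auto. intros w Hdw. exists n. destruct (Hw w Hdw). auto.
  - intros z Kz. destruct (exists_first_index Z z (Hcov z)) as [n [Zn Zj]].
    destruct (Hlocal z n Zn Zj) as [e [He Hw]].
    exists e. split; auto. intros w Hdw [m [Zm [Zmj Sm]]].
    destruct (Hw w Hdw) as [Znw Zjw].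
    destruct (Nat.lt_total m n) as [h|[->|h]].
    + exact (Zjw m h Zm).
    + apply Kz. exists n. auto.
    + exact (Zmj n h Znw).
Qed.

End ClopenAndCSets.

Section Separable.
Variable X : MetricSpace.
Hypothesis HXsep : separable X.

(* [G0] only witnesses that the family [Q] is nonempty. *)
Lemma separable_lindelof (O : X -> Prop) (Q : (X -> Prop) -> Prop) (G0 : X -> Prop) :
  Q G0 -> (forall y, O y -> exists G, Q G /\ interior X G y) ->
  exists g : nat -> X -> Prop,
    (forall n, Q (g n)) /\ (forall y, O y -> exists n, interior X (g n) y).
Proof.
  intros HQ0 Hcov. destruct HXsep as [D [[f Hf] Hd]].
  set (ball_in := fun (nN : nat * nat) (G : X -> Prop) =>
         forall z, dist X (f (fst nN)) z < / INR (snd nN) -> G z).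
  destruct (choice (fun nN G => Q G /\
     ((exists G', Q G' /\ ball_in nN G') -> ball_in nN G))) as [g Hg].
  { intros nN. destruct (classic (exists G', Q G' /\ ball_in nN G')) as [[G' HG']|Hno].
    - exists G'. tauto.
    - exists G0. tauto. }
  exists (fun k => g (of_nat k)). split; [intros k; apply Hg|].
  intros y Hy. destruct (Hcov y Hy) as [G [QG [e [He HG]]]].
  destruct (archimed_cor1 (e / 2)) as [N [HN HN0]]; [lra|].
  assert (HrN : 0 < / INR N) by (apply Rinv_0_lt_compat, lt_0_INR; lia).
  destruct (Hd y (/ INR N) HrN) as [d [Dd Hyd]].
  destruct (Hf d Dd) as [n <-].
  exists (to_nat (n, N)). rewrite cancel_of_to.
  assert (Hball : ball_in (n, N) (g (n, N))).
  { apply Hg. exists G. split; auto. intros z Hz. apply HG.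
    pose proof (dist_tri X y (f n) z). simpl in Hz. lra. }
  exists (/ INR N - dist X (f n) y). split; [rewrite dist_sym; lra|].
  intros w Hw. apply Hball. pose proof (dist_tri X (f n) y w). simpl. lra.
Qed.

Lemma Cset_clopen_separation (C1 C2 : X -> Prop) :
  C_set X C1 -> C_set X C2 -> (forall z, C1 z -> ~ C2 z) ->
  exists G, clopen X G /\ (forall z, C1 z -> G z) /\ (forall z, C2 z -> ~ G z).
Proof.
  intros H1 H2 Hd.
  destruct (separable_lindelof (fun _ => True)
     (fun Z => clopen X Z /\ ((forall w, C1 w -> ~ Z w) \/ (forall w, C2 w -> ~ Z w)))
     (fun _ => False)) as [Z [HZ HZcov]].
  { split; [apply clopen_empty|]. left; auto. }
  { intros y _. destruct (classic (C1 y)) as [h|h].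
    - destruct (clopen_nbhd_off_Cset X C2 y H2 (Hd y h)) as [W [cW [Wy Wn]]].
      exists W. split; [split; auto|]. exact (proj1 cW y Wy).
    - destruct (clopen_nbhd_off_Cset X C1 y H1 h) as [W [cW [Wy Wn]]].
      exists W. split; [split; auto|]. exact (proj1 cW y Wy). }
  assert (Hcov : forall z, exists n, Z n z).
  { intros z. destruct (HZcov z I) as [n Hn]. exists n. apply interior_sub, Hn. }
  set (avoids_C2 := fun n => forall w, C2 w -> ~ Z n w).
  exists (fun z => exists n, Z n z /\ (forall j, (j < n)%nat -> ~ Z j z) /\ avoids_C2 n).
  split; [exact (clopen_first_index X Z avoids_C2 (fun n => proj1 (HZ n)) Hcov)|].
  split.
  - intros z C1z. destruct (exists_first_index X Z z (Hcov z)) as [n [Zn Zj]].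
    exists n. split; [exact Zn|]. split; [exact Zj|].
    destruct (proj2 (HZ n)) as [h|h]; [exact (False_ind _ (h z C1z Zn))|exact h].
  - intros z C2z [n [Zn [_ Zc]]]. exact (Zc z C2z Zn).
Qed.

Section AlmostZeroDimensional.
Hypothesis HXazd : almost_zero_dimensional X.

Lemma open_countable_Cset_cover (O : X -> Prop) : is_open X O ->
  exists V : nat -> X -> Prop, (forall n, C_set X (V n) /\ subset X (V n) O) /\
    (forall y, O y -> exists n, interior X (V n) y).
Proof.
  intros HO.
  apply (separable_lindelof O (fun V => C_set X V /\ subset X V O) (fun _ => False)).
  - split; [apply Cset_empty|]. intros w [].
  - intros y Oy. destruct (HXazd y O HO Oy) as [V [CV [IV SV]]]. eauto.
Qed.

Lemma closed_sigmaC_Cset (F : X -> Prop) : is_closed X F -> sigmaC_set X F -> C_set X F.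
Proof.
  intros HF [D [HD ED]].
  destruct (open_countable_Cset_cover _ HF) as [V [HV HVcov]].
  exists (fun U => clopen X U /\ subset X F U). split; [tauto|].
  intros z. split; [intros Fz U [_ HU]; auto|].
  intros Hall. apply NNPP. intros nFz.
  destruct (HXazd z _ HF nFz) as [Vz [CVz [IVz SVz]]].
  set (W := fun k w => Vz w \/ exists i, (i <= k)%nat /\ V i w).
  assert (HG : forall k, exists G,
    clopen X G /\ (forall w, W k w -> G w) /\ (forall w, D k w -> ~ G w)).
  { intros k. apply Cset_clopen_separation; auto.
    - apply Cset_union; auto. apply Cset_finite_union. intros i. apply HV.
    - intros w [h|[i [_ h]]] Dw; [apply (SVz w h)|apply (proj2 (HV i) w h)];
        apply ED; eauto. }
  destruct (choice _ HG) as [G HGk].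
  set (P := fun w => forall k, G k w).
  assert (PF : forall w, P w -> ~ F w).
  { intros w Pw Fw. destruct (proj1 (ED w) Fw) as [n Dn].
    exact (proj2 (proj2 (HGk n)) w Dn (Pw n)). }
  assert (cP : clopen X P).
  { split; [|apply closed_inter; intros k; apply HGk].
    apply open_inter_eventually; [intros k; apply HGk|].
    intros w Pw. destruct (HVcov w (PF w Pw)) as [j [e [He Hj]]].
    exists j, e. split; auto. intros w' Hw' k Hk.
    apply (proj1 (proj2 (HGk k))). right. exists j. auto. }
  apply (Hall (fun w => ~ P w)).
  - split; [apply clopen_compl; auto|]. intros w Fw Pw. exact (PF w Pw Fw).
  - intros k. apply (proj1 (proj2 (HGk k))). left. apply interior_sub, IVz.
Qed.

Lemma closure_sigmaC (A B : X -> Prop) :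
  sigmaC_set X B -> subset X (boundary X A) B -> subset X B (closure X A) ->
  sigmaC_set X (closure X A).
Proof.
  intros [C [HC EB]] HAB HBA.
  destruct (open_countable_Cset_cover (interior X A) (interior_open X A)) as [T [HT HTcov]].
  exists (fun k w => C k w \/ T k w). split; [intros k; apply Cset_union; auto; apply HT|].
  intros y. split.
  - intros Fy. destruct (classic (B y)) as [By|nBy].
    + destruct (proj1 (EB y) By) as [n Cn]. exists n. auto.
    + destruct (HTcov y) as [n Tn]; [apply closure_not_boundary_interior; auto|].
      exists n. right. apply interior_sub, Tn.
  - intros [n [Cn|Tn]].
    + apply HBA, EB. eauto.
    + apply closure_sup, interior_sub, (proj2 (HT n)), Tn.
Qed.

End AlmostZeroDimensional.
End Separable.

Theorem theorem4p3 (X : MetricSpace) (HXsep : separable X)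
  (HX : almost_zero_dimensional X) (A B : X -> Prop) :
  sigmaC_set X B ->
  subset X (boundary X A) B ->
  subset X B (closure X A) ->
  C_set X (closure X A).
Proof.
  intros HB HAB HBA.
  apply closed_sigmaC_Cset; auto.
  - apply closure_closed.
  - apply (closure_sigmaC X HXsep HX A B); auto.
Qed.
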